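(* Let $A$ and $B$ be $k$-algebras and $\tau\colon B\otimes A\to A\otimes B$ a twisting map, and equip $A$, $B$ and $A\otimes_\tau B$ with their cofinite topologies. Consider the conditions: (i) $\tau\colon B\otimes^! A\to A\otimes^! B$ is continuous; (ii) the identity-on-$A\otimes B$ map $A\otimes^! B\to A\otimes_\tau B$ is a homeomorphism; (iii) there exist neighborhood bases of zero $\{I_\alpha\}\subseteq\mathcal F(A)$ and $\{J_\beta\}\subseteq\mathcal F(B)$ such that $\tau(B\otimes I_\alpha)\subseteq I_\alpha\otimes B$ and $\tau(J_\beta\otimes A)\subseteq A\otimes J_\beta$ for all $\alpha,\beta$. Then (i) and (ii) are equivalent, and (iii) implies (i).
   Context: $k$ is a field (discrete topology); algebras are unital associative. For an algebra $R$, $\mathcal F(R)$ is the set of two-sided ideals of finite codimension, and the cofinite topology on $R$ is the linear topology whose open subspaces are those containing some element of $\mathcal F(R)$ (so $\mathcal F(R)$ is a neighborhood basis of zero, and a subfamily is a neighborhood basis of zero if every element of $\mathcal F(R)$ contains a member of it). For linearly topologized spaces $E,F$, $E\otimes^!F$ is $E\otimes F$ with the linear topology whose open subspaces are those containing $E_0\otimes F+E\otimes F_0$ for some open subspaces $E_0\subseteq E$, $F_0\subseteq F$. A linear map $\tau\colon B\otimes A\to A\otimes B$ is a twisting map if the multiplication $m_\tau=(m_A\otimes m_B)\circ(\mathrm{id}_A\otimes\tau\otimes\mathrm{id}_B)$ on $A\otimes B$ is associative with identity $1_A\otimes1_B$; the resulting algebra is the twisted tensor product $A\otimes_\tau B$.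 *)

(* Tensor products of (possibly infinite-dimensional)
   k-vector spaces are given abstractly, by the universal property. *)
From mathcomp Require Import all_boot all_order all_algebra.
Set Implicit Arguments. Unset Strict Implicit. Unset Printing Implicit Defensive.
Import GRing.Theory.
Local Open Scope ring_scope.

Section Defs.
Variable k : fieldType.

Definition klinear (U W : lmodType k) (f : U -> W) : Prop :=
  forall (a : k) (u v : U), f (a *: u + v) = a *: f u + f v.

Definition kbilinear (U V W : lmodType k) (f : U -> V -> W) : Prop :=
  (forall u, klinear (f u)) /\ (forall v, klinear (fun u => f u v)).

Definition is_tensor (U V T : lmodType k) (t : U -> V -> T) : Prop :=
  kbilinear t /\
  forall (W : lmodType k) (f : U -> V -> W), kbilinear f ->
    exists g : T -> W, [/\ klinear g, (forall u v, g (t u v) = f u v) &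
      forall g' : T -> W, klinear g' -> (forall u v, g' (t u v) = f u v) ->
        forall x, g' x = g x].

Definition subspace (V : lmodType k) (W : V -> Prop) : Prop :=
  W 0 /\ forall (a : k) (x y : V), W x -> W y -> W (a *: x + y).

Definition kspan (V : lmodType k) (S : V -> Prop) (x : V) : Prop :=
  exists (s : seq V) (c : 'I_(size s) -> k),
    (forall i : 'I_(size s), S s`_i) /\ x = \sum_(i < size s) c i *: s`_i.

Definition fincodim_ideal (V : lmodType k) (mul : V -> V -> V) (I : V -> Prop)
  : Prop :=
  [/\ subspace I,
      (forall x y, I y -> I (mul x y) /\ I (mul y x)) &
      exists s : seq V, forall v, exists c : 'I_(size s) -> k,
        I (v - \sum_(i < size s) c i *: s`_i)].

(* A linear topology is described by its family of open subspaces [os]. *)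
Definition lin_open (V : lmodType k) (os : (V -> Prop) -> Prop) (U : V -> Prop)
  : Prop :=
  forall x, U x -> exists W, os W /\ forall w, W w -> U (x + w).

Definition lin_continuous (V W : lmodType k) (osV : (V -> Prop) -> Prop)
  (osW : (W -> Prop) -> Prop) (f : V -> W) : Prop :=
  forall U, lin_open osW U -> lin_open osV (fun x => U (f x)).

Definition cofinite_os (V : lmodType k) (mul : V -> V -> V) (W : V -> Prop)
  : Prop :=
  subspace W /\ exists I, fincodim_ideal mul I /\ forall x, I x -> W x.

Definition tsum_sub (E F T : lmodType k) (t : E -> F -> T)
  (E0 : E -> Prop) (F0 : F -> Prop) : T -> Prop :=
  kspan (fun x => exists u v, (E0 u \/ F0 v) /\ x = t u v).

Definition tleft_sub (E F T : lmodType k) (t : E -> F -> T) (P : E -> Prop)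
  : T -> Prop := kspan (fun x => exists u v, P u /\ x = t u v).
Definition tright_sub (E F T : lmodType k) (t : E -> F -> T) (Q : F -> Prop)
  : T -> Prop := kspan (fun x => exists u v, Q v /\ x = t u v).

Definition tensor_os (E F T : lmodType k) (t : E -> F -> T)
  (osE : (E -> Prop) -> Prop) (osF : (F -> Prop) -> Prop) (W : T -> Prop)
  : Prop :=
  subspace W /\ exists E0 F0, [/\ osE E0, osF F0 &
      forall x, tsum_sub t E0 F0 x -> W x].

(* [mul] is the multiplication m_tau on A (x) B:
   (a (x) b)(a' (x) b') = (L_a o R_b') (tau (b (x) a')),
   where L_a o R_b' is the linear map x (x) y |-> a x (x) y b'. *)
Definition twisted_mul (A B : algType k) (TAB TBA : lmodType k)
  (tAB : A -> B -> TAB) (tBA : B -> A -> TBA) (tau : TBA -> TAB)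
  (mul : TAB -> TAB -> TAB) : Prop :=
  kbilinear mul /\
  forall (a : A) (b : B) (a' : A) (b' : B),
    exists h : TAB -> TAB, [/\ klinear h,
      (forall x y, h (tAB x y) = tAB (a * x) (y * b')) &
      mul (tAB a b) (tAB a' b') = h (tau (tBA b a'))].

Definition twisting_map (A B : algType k) (TAB TBA : lmodType k)
  (tAB : A -> B -> TAB) (tBA : B -> A -> TBA) (tau : TBA -> TAB)
  (mul : TAB -> TAB -> TAB) : Prop :=
  [/\ klinear tau, twisted_mul tAB tBA tau mul,
      associative mul, left_id (tAB 1 1) mul & right_id (tAB 1 1) mul].

Definition nbhd_basis_F (V : lmodType k) (mul : V -> V -> V)
  (fam : (V -> Prop) -> Prop) : Prop :=
  (forall I, fam I -> fincodim_ideal mul I) /\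
  (forall I, fincodim_ideal mul I -> exists J, fam J /\ forall x, J x -> I x).

End Defs.

(* Continuity of tau at 0 unfolds to an algebraic condition: for all cofinite
   ideals I of A and J of B there are cofinite ideals I1, J1 with
   tau(J1 ⊗ A + B ⊗ I1) ⊆ I ⊗ B + A ⊗ J; condition (iii) gives it at once.
   The identity A ⊗^! B -> A ⊗_tau B is always continuous: a cofinite ideal K
   of A ⊗_tau B contains (K ∩ A) ⊗ B + A ⊗ (K ∩ B), because
   a ⊗ b = (a ⊗ 1)(1 ⊗ b), and these slices are cofinite ideals.  Continuity of
   the inverse means that every I ⊗ B + A ⊗ J contains a cofinite ideal of
   A ⊗_tau B.  As (1 ⊗ b)(a ⊗ 1) = tau(b ⊗ a), slicing such an ideal yields the
   condition; conversely, the condition applied twice gives cofinite I'', J''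
   with p (I'' ⊗ B + A ⊗ J'') q ⊆ I ⊗ B + A ⊗ J for all p, q, so the largest
   ideal inside I ⊗ B + A ⊗ J has finite codimension. *)

From HB Require Import structures.
From mathcomp Require Import all_boot all_order all_algebra.
From mathcomp Require Import boolp.
Set Implicit Arguments. Unset Strict Implicit. Unset Printing Implicit Defensive.
Import GRing.Theory.
Local Open Scope ring_scope.

Section LinearAlgebra.
Variable k : fieldType.

Section KLinear.
Variables (U W : lmodType k) (f : U -> W).
Hypothesis f_lin : klinear f.

HB.instance Definition _ := GRing.isLinear.Build k U W *:%R f f_lin.

Lemma klinear0 : f 0 = 0. Proof. exact: raddf0. Qed.
Lemma klinearD u v : f (u + v) = f u + f v. Proof. exact: raddfD. Qed.
Lemma klinearZ a u : f (a *: u) = a *: f u. Proof. exact: linearZ. Qed.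
Lemma klinearB u v : f (u - v) = f u - f v. Proof. exact: raddfB. Qed.

End KLinear.

Section Subspace.
Variables (U : lmodType k) (P : U -> Prop).
Hypothesis P_sub : subspace P.

Lemma subspace0 : P 0. Proof. by case: P_sub. Qed.
Lemma subspaceZD a x y : P x -> P y -> P (a *: x + y).
Proof. by case: P_sub => _; apply. Qed.
Lemma subspaceD x y : P x -> P y -> P (x + y).
Proof. by move=> Px Py; rewrite -[x]scale1r; apply: subspaceZD. Qed.
Lemma subspaceZ a x : P x -> P (a *: x).
Proof. by move=> Px; rewrite -[_ *: _]addr0; apply: subspaceZD => //; apply: subspace0. Qed.
Lemma subspaceB x y : P x -> P y -> P (x - y).
Proof. by move=> Px Py; rewrite -scaleN1r; apply: subspaceD => //; apply: subspaceZ. Qed.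
Lemma subspace_sum n (F : 'I_n -> U) : (forall i, P (F i)) -> P (\sum_(i < n) F i).
Proof. by move=> PF; elim/big_ind: _ => //; [apply: subspace0 | apply: subspaceD]. Qed.

End Subspace.

Lemma subspace_preim (U W : lmodType k) (f : U -> W) (P : W -> Prop) :
  klinear f -> subspace P -> subspace (fun x => P (f x)).
Proof.
move=> f_lin P_sub; split; first by rewrite klinear0 //; apply: subspace0.
by move=> a x y Px Py; rewrite f_lin; apply: subspaceZD.
Qed.

Lemma subspace_preim_forall (U W : lmodType k) (I : Type) (f : I -> U -> W)
  (P : W -> Prop) :
  (forall i, klinear (f i)) -> subspace P -> subspace (fun x => forall i, P (f i x)).
Proof.
move=> f_lin P_sub; split=> [i | a x y Px Py i]; first by rewrite klinear0 //; apply: subspace0.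
by rewrite f_lin; apply: subspaceZD.
Qed.

Lemma subspaceI (U : lmodType k) (P Q : U -> Prop) :
  subspace P -> subspace Q -> subspace (fun x => P x /\ Q x).
Proof.
move=> P_sub Q_sub; split; first by split; apply: subspace0.
by move=> a x y [? ?] [? ?]; split; apply: subspaceZD.
Qed.

Inductive lin_span (U : lmodType k) (S : U -> Prop) : U -> Prop :=
| lin_span0 : lin_span S 0
| lin_spanZD a x y : S x -> lin_span S y -> lin_span S (a *: x + y).

Section LinSpan.
Variables (U : lmodType k) (S : U -> Prop).

Lemma lin_span_min (P : U -> Prop) :
  subspace P -> (forall x, S x -> P x) -> forall x, lin_span S x -> P x.
Proof.
move=> P_sub SP x; elim=> [|a y z Sy _ Pz]; first exact: subspace0.
by apply: subspaceZD => //; apply: SP.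
Qed.

Lemma subspace_lin_span : subspace (lin_span S).
Proof.
split=> [|a x y]; first exact: lin_span0.
elim=> [|b u v Su _ IH] Sy; first by rewrite scaler0 add0r.
by rewrite scalerDr scalerA -addrA; apply: lin_spanZD => //; apply: IH.
Qed.

Lemma lin_span_gen x : S x -> lin_span S x.
Proof. by move=> Sx; rewrite -[x]addr0 -[x]scale1r; apply: lin_spanZD => //; apply: lin_span0. Qed.

Lemma lin_span_kspan x : kspan S x -> lin_span S x.
Proof.
case=> s [c [Ss ->]]; apply: (subspace_sum subspace_lin_span) => i.
by apply: (subspaceZ subspace_lin_span); apply: lin_span_gen.
Qed.

End LinSpan.

Lemma kspan_gen (U : lmodType k) (S : U -> Prop) x : S x -> kspan S x.
Proof.
move=> Sx; exists [:: x], (fun _ => 1); split; first by case=> [[|]].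
by rewrite big_ord1 scale1r.
Qed.

Definition seq_span (U : lmodType k) (s : seq U) := lin_span (fun x => x \in s).

Lemma seq_span_sum (U : lmodType k) (s : seq U) (c : 'I_(size s) -> k) :
  seq_span s (\sum_(i < size s) c i *: s`_i).
Proof.
apply: (subspace_sum (subspace_lin_span _)) => i.
by apply: (subspaceZ (subspace_lin_span _)); apply: lin_span_gen; apply: mem_nth.
Qed.

Lemma seq_span_lincomb (U : lmodType k) (s : seq U) y :
  seq_span s y -> exists c : 'I_(size s) -> k, y = \sum_(i < size s) c i *: s`_i.
Proof.
elim=> [|a x z xs _ [c ->]].
  by exists (fun _ => 0); rewrite big1 // => i _; rewrite scale0r.
pose j : 'I_(size s) := Ordinal (etrans (index_mem x s) xs).
exists (fun i => (i == j)%:R * a + c i).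
rewrite [RHS](eq_bigr _ (fun i _ => scalerDl _ _ _)) big_split /=; congr (_ + _).
rewrite (bigD1 j) //= eqxx mul1r nth_index // big1 ?addr0 // => i /negbTE ->.
by rewrite mul0r scale0r.
Qed.

Lemma seq_span_sub (U : lmodType k) (s s' : seq U) :
  {subset s <= s'} -> forall y, seq_span s y -> seq_span s' y.
Proof.
move=> ss'; apply: lin_span_min; first exact: subspace_lin_span.
by move=> x /ss'; apply: lin_span_gen.
Qed.

End LinearAlgebra.

Section FiniteCodimension.
Variable k : fieldType.

Definition modspan (U : lmodType k) (K : U -> Prop) (s : seq U) (v : U) :=
  exists2 y, seq_span s y & K (v - y).

Definition fincodim (U : lmodType k) (K : U -> Prop) :=
  exists s : seq U, forall v, modspan K s v.

Lemma fincodimP (U : lmodType k) (K : U -> Prop) :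
  (exists s : seq U, forall v, exists c : 'I_(size s) -> k,
     K (v - \sum_(i < size s) c i *: s`_i)) <-> fincodim K.
Proof.
split=> -[s Ks]; exists s => v.
  by have [c Kc] := Ks v; exists (\sum_(i < size s) c i *: s`_i); first exact: seq_span_sum.
by have [y /seq_span_lincomb [c ->] Ky] := Ks v; exists c.
Qed.

Lemma fincodim_mono (U : lmodType k) (P Q : U -> Prop) :
  (forall x, P x -> Q x) -> fincodim P -> fincodim Q.
Proof. by move=> PQ [s Ps]; exists s => v; have [y ? /PQ ?] := Ps v; exists y. Qed.

Lemma subspace_modspan (U : lmodType k) (K : U -> Prop) s :
  subspace K -> subspace (modspan K s).
Proof.
move=> K_sub; split; first by exists 0; [exact: lin_span0 | rewrite subr0; exact: subspace0].
move=> a u w [yu su Ku] [yw sw Kw]; exists (a *: yu + yw).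
  exact: subspaceZD (subspace_lin_span _) _ _ _ su sw.
by rewrite opprD addrACA -scalerBr; apply: subspaceZD.
Qed.

Lemma seq_span_cons (U : lmodType k) (x : U) s y :
  seq_span (x :: s) y -> exists c, seq_span s (y - c *: x).
Proof.
elim=> [|a z w]; first by exists 0; rewrite scale0r subr0; apply: lin_span0.
rewrite inE => /predU1P [-> | zs] _ [c sc].
  by exists (a + c); rewrite scalerDl opprD addrACA subrr add0r.
by exists c; rewrite -addrA; apply: lin_spanZD.
Qed.

Lemma modspan_cons (U : lmodType k) (K : U -> Prop) x s v :
  modspan K (x :: s) v -> exists c, modspan K s (v - c *: x).
Proof.
case=> y /seq_span_cons [c sc] Ky; exists c; exists (y - c *: x) => //.
by rewrite opprB addrA subrK.
Qed.

Lemma modspan_nil (U : lmodType k) (K : U -> Prop) v : modspan K [::] v -> K v.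
Proof.
case=> y sy; suff -> : y = 0 by rewrite subr0.
by elim: sy => // a x z; rewrite in_nil.
Qed.

Section Preimage.
Variables (V W : lmodType k) (f : V -> W) (K : W -> Prop).
Hypotheses (f_lin : klinear f) (K_sub : subspace K).

(* The induction is on the spanning sequence [s] of [W] modulo [K]; the
   generator [x] is either hit by some [v0] in [D], which then joins [s'],
   or can be dropped. *)
Lemma fincodim_preim_in s D : subspace D ->
  (forall v, D v -> modspan K s (f v)) ->
  exists2 s' : seq V, (forall z, z \in s' -> D z) &
    forall v, D v -> modspan (fun x => K (f x)) s' v.
Proof.
elim: s D => [|x s IH] D D_sub Ds.
  exists [::] => // v Dv; exists 0; first exact: lin_span0.
  by rewrite subr0; apply: modspan_nil (Ds v Dv).
have modspan_sub := subspace_modspan s K_sub.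
have [[v0 Dv0 v0x] | no_v0] := pselect (exists2 v0, D v0 & modspan K s (f v0 - x)).
  pose D' v := D v /\ modspan K s (f v).
  have D'_sub : subspace D' by apply: subspaceI => //; apply: subspace_preim.
  have [s' s'D' Hs'] := IH D' D'_sub (fun v => @proj2 _ _).
  exists (v0 :: s') => [z | v Dv]; first by rewrite inE => /predU1P [-> | /s'D' []].
  have [c vc] := modspan_cons (Ds v Dv).
  have D'v : D' (v - c *: v0).
    split; first by apply: subspaceB => //; apply: subspaceZ.
    have -> : f (v - c *: v0) = (f v - c *: x) - c *: (f v0 - x).
      by rewrite (klinearB f_lin) (klinearZ f_lin) scalerBr opprB addrA subrK.
    by apply: subspaceB => //; apply: subspaceZ.
  have [y' s'y' Ky'] := Hs' _ D'v; exists (c *: v0 + y'); last by rewrite opprD addrA.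
  apply: lin_spanZD; first exact: mem_head.
  by apply: seq_span_sub s'y' => z zs; rewrite inE zs orbT.
apply: IH => // v Dv; have [c vc] := modspan_cons (Ds v Dv).
have [c0 | nz_c] := eqVneq c 0; first by move: vc; rewrite c0 scale0r subr0.
case: no_v0; exists (c^-1 *: v); first exact: subspaceZ.
have -> : f (c^-1 *: v) - x = c^-1 *: (f v - c *: x).
  by rewrite (klinearZ f_lin) scalerBr scalerA mulVf // scale1r.
exact: subspaceZ.
Qed.

Lemma fincodim_preim : fincodim K -> fincodim (fun x => K (f x)).
Proof.
case=> s Ks; have True_sub : subspace (fun _ : V => True) by [].
have [s' _ Ks'] := fincodim_preim_in True_sub (fun v _ => Ks (f v)).
by exists s' => v; apply: Ks'.
Qed.

End Preimage.

Lemma fincodimI (U : lmodType k) (P Q : U -> Prop) :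
  subspace P -> subspace Q -> fincodim P -> fincodim Q -> fincodim (fun x => P x /\ Q x).
Proof.
move=> P_sub Q_sub [sP HP] [sQ HQ].
have id_lin : klinear (@id U) by [].
have [s' s'P HQ'] := fincodim_preim_in id_lin Q_sub P_sub (fun v _ => HQ v).
exists (sP ++ s') => v; have [y1 sy1 Py1] := HP v; have [y2 sy2 Qy2] := HQ' _ Py1.
have Py2 : P y2 by apply: lin_span_min sy2.
exists (y1 + y2); last by rewrite opprD addrA; split => //; apply: subspaceB.
apply: (subspaceD (subspace_lin_span _)).
  by apply: seq_span_sub sy1 => z zs; rewrite mem_cat zs.
by apply: seq_span_sub sy2 => z zs; rewrite mem_cat zs orbT.
Qed.

Lemma fincodim_idealI (U : lmodType k) (m : U -> U -> U) (P Q : U -> Prop) :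
  fincodim_ideal m P -> fincodim_ideal m Q -> fincodim_ideal m (fun x => P x /\ Q x).
Proof.
move=> [P_sub Pm /(fincodimP P) Pfc] [Q_sub Qm /(fincodimP Q) Qfc]; split.
- exact: subspaceI.
- by move=> x y [/(Pm x) [? ?] /(Qm x) [? ?]].
- by apply/(fincodimP (fun x => P x /\ Q x)); apply: fincodimI.
Qed.

End FiniteCodimension.

Section Tensor.
Variables (k : fieldType) (U V T : lmodType k) (t : U -> V -> T).
Hypothesis t_tensor : is_tensor t.

Lemma tensor_linr u : klinear (t u). Proof. by case: t_tensor => -[]. Qed.
Lemma tensor_linl v : klinear (t^~ v). Proof. by case: t_tensor => -[]. Qed.

Lemma tensor_ext (W : lmodType k) (g1 g2 : T -> W) :
  klinear g1 -> klinear g2 -> (forall u v, g1 (t u v) = g2 (t u v)) ->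
  forall x, g1 x = g2 x.
Proof.
move=> g1_lin g2_lin g12 x.
have g1t_bilin : kbilinear (fun u v => g1 (t u v)).
  by split=> [u|v] a y z; rewrite -g1_lin; congr g1; [apply: tensor_linr | apply: tensor_linl].
have [g [_ _ g_uniq]] := t_tensor.2 W _ g1t_bilin.
by rewrite (g_uniq g1) // (g_uniq g2).
Qed.

Lemma tensor_id (g : T -> T) : klinear g -> (forall u v, g (t u v) = t u v) ->
  forall x, g x = x.
Proof. by move=> g_lin; apply: (@tensor_ext _ g id). Qed.

Section Induction.
Variable P : T -> Prop.
Hypothesis P_sub : subspace P.

Let Pmem : {pred T} := fun x => `[< P x >].

Let Pmem_closed : submod_closed Pmem.
Proof.
split=> [|a x y /asboolP Px /asboolP Py]; apply/asboolP; first exact: subspace0.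
exact: subspaceZD.
Qed.

HB.instance Definition _ := GRing.isSubmodClosed.Build k T Pmem Pmem_closed.
HB.instance Definition _ := [SubChoice_isSubLmodule of {x : T | x \in Pmem} by <:].

(* Corestrict [t] to [P]: the induced linear map [T -> P], followed by the
   inclusion, agrees with the identity on pure tensors. *)
Lemma tensor_ind : (forall u v, P (t u v)) -> forall x, P x.
Proof.
move=> Pt; pose tP u v : {x : T | x \in Pmem} := exist _ (t u v) (asboolT (Pt u v)).
have tP_bilin : kbilinear tP.
  by split=> [u|v] a x y; apply: val_inj; [exact: tensor_linr | exact: tensor_linl].
have [g [g_lin gt _]] := t_tensor.2 _ _ tP_bilin.
move=> x; have /asboolP := valP (g x); congr P.
apply: (@tensor_ext _ (fun x => val (g x)) id) => // [a y z | u v].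
  by rewrite g_lin.
by rewrite gt.
Qed.

End Induction.

Definition tsum (I : U -> Prop) (J : V -> Prop) : T -> Prop :=
  lin_span (fun x => exists u v, (I u \/ J v) /\ x = t u v).

Section TensorSum.
Variables (I : U -> Prop) (J : V -> Prop).

Lemma tsum_gen u v : I u \/ J v -> tsum I J (t u v).
Proof. by move=> IJuv; apply: lin_span_gen; exists u, v. Qed.

Lemma tsum_min (P : T -> Prop) : subspace P ->
  (forall u v, I u \/ J v -> P (t u v)) -> forall x, tsum I J x -> P x.
Proof. by move=> P_sub Pt; apply: lin_span_min => // _ [u [v [IJuv ->]]]; apply: Pt. Qed.

Lemma tsum_sub_tsum x : tsum_sub t I J x -> tsum I J x.
Proof. exact: lin_span_kspan. Qed.

Lemma seq_span_tensor (sU : seq U) (sV : seq V) u v :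
  seq_span sU u -> seq_span sV v -> seq_span [seq t x y | x <- sU, y <- sV] (t u v).
Proof.
move=> su sv; move: u su; apply: lin_span_min.
  exact: subspace_preim (tensor_linl v) (subspace_lin_span _).
move=> x xs; move: v sv; apply: lin_span_min.
  exact: subspace_preim (tensor_linr x) (subspace_lin_span _).
by move=> y ys; apply: lin_span_gen; apply: allpairs_f.
Qed.

Lemma fincodim_tsum : fincodim I -> fincodim J -> fincodim (tsum I J).
Proof.
move=> [sU Is] [sV Js]; exists [seq t x y | x <- sU, y <- sV].
apply: tensor_ind; first exact: subspace_modspan (subspace_lin_span _).
move=> u v; have [yu su Iu] := Is u; have [yv sv Jv] := Js v.
exists (t yu yv); first exact: seq_span_tensor.
have -> : t u v - t yu yv = t (u - yu) v + t yu (v - yv).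
  by rewrite (klinearB (tensor_linl v)) (klinearB (tensor_linr yu)) addrA subrK.
by apply: (subspaceD (subspace_lin_span _)); apply: tsum_gen; [left | right].
Qed.

End TensorSum.

Lemma tsum_mono (I I' : U -> Prop) (J J' : V -> Prop) :
  (forall u, I u -> I' u) -> (forall v, J v -> J' v) ->
  forall x, tsum I J x -> tsum I' J' x.
Proof.
move=> II' JJ'; apply: tsum_min; first exact: subspace_lin_span.
by move=> u v [/II' | /JJ'] ?; apply: tsum_gen; [left | right].
Qed.

End Tensor.

Section CofiniteTopology.
Variables (k : fieldType) (E F : algType k) (T : lmodType k) (t : E -> F -> T).

Let osE := cofinite_os (V := E) *%R.
Let osF := cofinite_os (V := F) *%R.

Lemma tensor_os_tsum I J : fincodim_ideal *%R I -> fincodim_ideal *%R J ->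
  tensor_os t osE osF (tsum t I J).
Proof.
move=> I_id J_id; split; first exact: subspace_lin_span.
exists I, J; split; last exact: tsum_sub_tsum.
- by split; [case: I_id | exists I].
- by split; [case: J_id | exists J].
Qed.

Lemma lin_open_tsum I J : fincodim_ideal *%R I -> fincodim_ideal *%R J ->
  lin_open (tensor_os t osE osF) (tsum t I J).
Proof.
move=> I_id J_id x tIJx; exists (tsum t I J); split; first exact: tensor_os_tsum.
by move=> w; apply: subspaceD (subspace_lin_span _) _ _ tIJx.
Qed.

Lemma tensor_os_contains_tsum W : tensor_os t osE osF W ->
  exists I J, [/\ fincodim_ideal *%R I, fincodim_ideal *%R J &
                  forall x, tsum t I J x -> W x].
Proof.
move=> [W_sub [E0 [F0 [[_ [I [I_id IE0]]] [_ [J [J_id JF0]]] tsumW]]]].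
exists I, J; split => //; apply: tsum_min => // u v IJuv; apply: tsumW.
by apply: kspan_gen; exists u, v; split => //; case: IJuv => [/IE0 | /JF0]; [left | right].
Qed.

End CofiniteTopology.

Section TwistedTensorProduct.
Variables (k : fieldType) (A B : algType k) (TAB TBA : lmodType k)
  (tAB : A -> B -> TAB) (tBA : B -> A -> TBA) (tau : TBA -> TAB)
  (mul : TAB -> TAB -> TAB).
Hypotheses (tAB_tensor : is_tensor tAB) (tau_twisting : twisting_map tAB tBA tau mul).

Let osA := cofinite_os (V := A) *%R.
Let osB := cofinite_os (V := B) *%R.
Let osAB := tensor_os tAB osA osB.

Lemma twist_linear : klinear tau. Proof. by case: tau_twisting. Qed.
Lemma twisted_mul_linr p : klinear (mul p).
Proof. by case: tau_twisting => _ [[]]. Qed.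
Lemma twisted_mul_linl q : klinear (mul^~ q).
Proof. by case: tau_twisting => _ [[]]. Qed.
Lemma twisted_mulA : associative mul. Proof. by case: tau_twisting. Qed.
Lemma twisted_mul1l : left_id (tAB 1 1) mul. Proof. by case: tau_twisting. Qed.
Lemma twisted_mul1r : right_id (tAB 1 1) mul. Proof. by case: tau_twisting. Qed.

Lemma twisted_mul_pure a b a' b' : exists h, [/\ klinear h,
  forall x y, h (tAB x y) = tAB (a * x) (y * b') &
  mul (tAB a b) (tAB a' b') = h (tau (tBA b a'))].
Proof. by case: tau_twisting => _ [_ mul_tw] _ _ _; apply: mul_tw. Qed.

Lemma twist_pure b a : tau (tBA b a) = mul (tAB 1 b) (tAB a 1).
Proof.
have [h [h_lin h_pure ->]] := twisted_mul_pure 1 b a 1.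
by rewrite (tensor_id tAB_tensor h_lin) // => x y; rewrite h_pure mul1r mulr1.
Qed.

Lemma twist_1l a : tau (tBA 1 a) = tAB a 1.
Proof. by rewrite twist_pure twisted_mul1l. Qed.

Lemma twist_1r b : tau (tBA b 1) = tAB 1 b.
Proof. by rewrite twist_pure twisted_mul1r. Qed.

Lemma twisted_mul_pureA a a' : mul (tAB a 1) (tAB a' 1) = tAB (a * a') 1.
Proof. by have [h [_ h_pure ->]] := twisted_mul_pure a 1 a' 1; rewrite twist_1l h_pure mulr1. Qed.

Lemma twisted_mul_pureB b b' : mul (tAB 1 b) (tAB 1 b') = tAB 1 (b * b').
Proof. by have [h [_ h_pure ->]] := twisted_mul_pure 1 b 1 b'; rewrite twist_1r h_pure mul1r. Qed.

Lemma twisted_mul_pureAB a b : mul (tAB a 1) (tAB 1 b) = tAB a b.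
Proof.
by have [h [_ h_pure ->]] := twisted_mul_pure a 1 1 b; rewrite twist_1l h_pure mulr1 mul1r.
Qed.

Lemma fincodim_ideal_slices K : fincodim_ideal mul K ->
  fincodim_ideal *%R (fun a => K (tAB a 1)) /\ fincodim_ideal *%R (fun b => K (tAB 1 b)).
Proof.
move=> [K_sub K_id /(fincodimP K) K_fc]; split; split.
- exact: subspace_preim (tensor_linl tAB_tensor 1) K_sub.
- by move=> x y Ky; rewrite -!twisted_mul_pureA; apply: K_id.
- apply/(fincodimP (fun a => K (tAB a 1))).
  exact: fincodim_preim (tensor_linl tAB_tensor 1) K_sub K_fc.
- exact: subspace_preim (tensor_linr tAB_tensor 1) K_sub.
- by move=> x y Ky; rewrite -!twisted_mul_pureB; apply: K_id.
- apply/(fincodimP (fun b => K (tAB 1 b))).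
  exact: fincodim_preim (tensor_linr tAB_tensor 1) K_sub K_fc.
Qed.

Definition twist_compatible := forall (I : A -> Prop) (J : B -> Prop),
  fincodim_ideal *%R I -> fincodim_ideal *%R J ->
  exists I1 J1, [/\ fincodim_ideal *%R I1, fincodim_ideal *%R J1 &
    forall a b, I1 a \/ J1 b -> tsum tAB I J (tau (tBA b a))].

Section IdealTensorSum.
Variables (I : A -> Prop) (J : B -> Prop).
Hypotheses (I_id : fincodim_ideal *%R I) (J_id : fincodim_ideal *%R J).

Let tsum_IJ_sub : subspace (tsum tAB I J) := subspace_lin_span _.

Lemma tsum_mul_stable a b h : klinear h ->
  (forall x y, h (tAB x y) = tAB (a * x) (y * b)) ->
  forall z, tsum tAB I J z -> tsum tAB I J (h z).
Proof.
case: I_id J_id => [_ I_mul _] [_ J_mul _] h_lin h_pure.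
apply: tsum_min; first exact: subspace_preim h_lin tsum_IJ_sub.
move=> u v IJuv; rewrite h_pure; apply: tsum_gen.
by case: IJuv => [/(I_mul a) [] | /(J_mul b) []]; [left | right].
Qed.

Lemma tsum_mull (I1 : A -> Prop) :
  (forall a b, I1 a -> tsum tAB I J (tau (tBA b a))) ->
  forall z, tsum tAB I1 J z -> forall p, tsum tAB I J (mul p z).
Proof.
move=> twI1; apply: tsum_min.
  exact: subspace_preim_forall twisted_mul_linr tsum_IJ_sub.
move=> x y I1x_Jy; apply: (tensor_ind tAB_tensor).
  exact: subspace_preim (twisted_mul_linl _) tsum_IJ_sub.
move=> a b; have [h [h_lin h_pure ->]] := twisted_mul_pure a b x y.
case: I1x_Jy => [I1x | Jy]; first exact: (tsum_mul_stable h_lin h_pure (twI1 x b I1x)).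
move: (tau _); apply: (tensor_ind tAB_tensor).
  exact: subspace_preim h_lin tsum_IJ_sub.
move=> u w; rewrite h_pure; apply: tsum_gen; right.
by case: J_id => _ /(_ w y Jy) [].
Qed.

Lemma tsum_mulr (J1 : B -> Prop) :
  (forall a b, J1 b -> tsum tAB I J (tau (tBA b a))) ->
  forall z, tsum tAB I J1 z -> forall q, tsum tAB I J (mul z q).
Proof.
move=> twJ1; apply: tsum_min.
  exact: subspace_preim_forall twisted_mul_linl tsum_IJ_sub.
move=> x y Ix_J1y; apply: (tensor_ind tAB_tensor).
  exact: subspace_preim (twisted_mul_linr _) tsum_IJ_sub.
move=> a b; have [h [h_lin h_pure ->]] := twisted_mul_pure x y a b.
case: Ix_J1y => [Ix | J1y]; last exact: (tsum_mul_stable h_lin h_pure (twJ1 a y J1y)).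
move: (tau _); apply: (tensor_ind tAB_tensor).
  exact: subspace_preim h_lin tsum_IJ_sub.
move=> u w; rewrite h_pure; apply: tsum_gen; left.
by case: I_id => _ /(_ u x Ix) [].
Qed.

End IdealTensorSum.

Section Compatible.
Hypothesis tau_compat : twist_compatible.

Lemma tsum_mul_shrink I J : fincodim_ideal *%R I -> fincodim_ideal *%R J ->
  exists I' J', [/\ fincodim_ideal *%R I', fincodim_ideal *%R J',
    (forall z p, tsum tAB I' J' z -> tsum tAB I J (mul p z)) &
    (forall z q, tsum tAB I' J' z -> tsum tAB I J (mul z q))].
Proof.
move=> I_id J_id; have [I1 [J1 [I1_id J1_id twI1J1]]] := tau_compat I_id J_id.
exists (fun a => I a /\ I1 a), (fun b => J b /\ J1 b).
split; try exact: fincodim_idealI.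
- move=> z p /(tsum_mono (fun _ => @proj2 _ _) (fun _ => @proj1 _ _)) z_tsum.
  by apply: tsum_mull z_tsum p => // a b I1a; apply: twI1J1; left.
- move=> z q /(tsum_mono (fun _ => @proj1 _ _) (fun _ => @proj2 _ _)) z_tsum.
  by apply: tsum_mulr z_tsum q => // a b J1b; apply: twI1J1; right.
Qed.

Lemma tsum_contains_ideal I J : fincodim_ideal *%R I -> fincodim_ideal *%R J ->
  exists K, fincodim_ideal mul K /\ forall z, K z -> tsum tAB I J z.
Proof.
move=> I_id J_id; have [I' [J' [I'_id J'_id _ tsum'_mulr]]] := tsum_mul_shrink I_id J_id.
have [I'' [J'' [[_ _ I''_fc] [_ _ J''_fc] tsum''_mull _]]] :=
  tsum_mul_shrink I'_id J'_id.
pose K z := forall p q, tsum tAB I J (mul (mul p z) q).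
exists K; split; last first.
  by move=> z Kz; have := Kz (tAB 1 1) (tAB 1 1); rewrite twisted_mul1l twisted_mul1r.
split.
- apply: (subspace_preim_forall (P := fun w => forall q, tsum tAB I J (mul w q))
    twisted_mul_linr).
  exact: (subspace_preim_forall twisted_mul_linl (subspace_lin_span _)).
- move=> x y Ky; split=> p q; first by rewrite twisted_mulA; apply: Ky.
  by rewrite twisted_mulA -(twisted_mulA (mul p y)); apply: Ky.
- have tsum''_fc := fincodim_tsum tAB_tensor ((fincodimP I'').1 I''_fc) ((fincodimP J'').1 J''_fc).
  apply/(fincodimP K); apply: fincodim_mono tsum''_fc => z z_tsum p q.
  by apply: tsum'_mulr; apply: tsum''_mull.
Qed.

End Compatible.

Lemma continuous_id_tensor_twisted : lin_continuous osAB (cofinite_os mul) id.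
Proof.
move=> U U_open x Ux; have [W [[W_sub [K [K_id KW]]] W_nbhd]] := U_open x Ux.
exists W; split => //; split => //.
have [I_id J_id] := fincodim_ideal_slices K_id.
case: K_id => K_sub K_mul _.
exists (fun a => K (tAB a 1)), (fun b => K (tAB 1 b)); split.
- by split; [case: I_id | exists (fun a => K (tAB a 1))].
- by split; [case: J_id | exists (fun b => K (tAB 1 b))].
- move=> z /tsum_sub_tsum z_tsum; apply: KW; apply: (tsum_min K_sub _ z_tsum) => u v.
  by rewrite -(twisted_mul_pureAB u v) => -[/(K_mul (tAB 1 v)) [] | /(K_mul (tAB u 1)) []].
Qed.

Lemma continuous_id_twisted_tensor :
  twist_compatible -> lin_continuous (cofinite_os mul) osAB id.
Proof.
move=> tau_compat U U_open x Ux; have [W [W_os W_nbhd]] := U_open x Ux.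
have [I [J [I_id J_id tsumW]]] := tensor_os_contains_tsum W_os.
have [K [K_id K_tsum]] := tsum_contains_ideal tau_compat I_id J_id.
exists W; split => //; split; first by case: W_os.
by exists K; split => // z /K_tsum /tsumW.
Qed.

Lemma continuous_twist :
  twist_compatible -> lin_continuous (tensor_os tBA osB osA) osAB tau.
Proof.
move=> tau_compat U U_open x Ux; have [W [W_os W_nbhd]] := U_open _ Ux.
have [I [J [I_id J_id tsumW]]] := tensor_os_contains_tsum W_os.
have [I1 [J1 [I1_id J1_id twI1J1]]] := tau_compat I J I_id J_id.
exists (tsum tBA J1 I1); split; first exact: tensor_os_tsum.
move=> w w_tsum; rewrite (klinearD twist_linear); apply: W_nbhd; apply: tsumW.
apply: (tsum_min (subspace_preim twist_linear (subspace_lin_span _)) _ w_tsum).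
by move=> b a J1b_I1a; apply: twI1J1; case: J1b_I1a; [right | left].
Qed.

Lemma twist_compatible_of_continuous_twist :
  lin_continuous (tensor_os tBA osB osA) osAB tau -> twist_compatible.
Proof.
move=> tau_cont I J I_id J_id.
have tau0 : tsum tAB I J (tau 0) by rewrite (klinear0 twist_linear); apply: lin_span0.
have [W1 [W1_os W1_nbhd]] := tau_cont _ (lin_open_tsum (t := tAB) I_id J_id) 0 tau0.
have [J1 [I1 [J1_id I1_id tsumW1]]] := tensor_os_contains_tsum W1_os.
exists I1, J1; split => // a b I1a_J1b; rewrite -[tBA b a]add0r; apply: W1_nbhd.
by apply: tsumW1; apply: tsum_gen; case: I1a_J1b; [right | left].
Qed.

Lemma twist_compatible_of_continuous_id :
  lin_continuous (cofinite_os mul) osAB id -> twist_compatible.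
Proof.
move=> id_cont I J I_id J_id.
have tsum_open := lin_open_tsum (t := tAB) I_id J_id.
have [W [[_ [K [K_id KW]]] W_nbhd]] := id_cont _ tsum_open 0 (lin_span0 _).
have [I1_id J1_id] := fincodim_ideal_slices K_id.
case: K_id => _ K_mul _.
exists (fun a => K (tAB a 1)), (fun b => K (tAB 1 b)); split => // a b I1a_J1b.
rewrite -[tau _]add0r; apply: W_nbhd; apply: KW; rewrite twist_pure.
by case: I1a_J1b => [/(K_mul (tAB 1 b)) [] | /(K_mul (tAB a 1)) []].
Qed.

Lemma twist_compatible_of_stable_bases famA famB :
  nbhd_basis_F *%R famA -> nbhd_basis_F *%R famB ->
  (forall I, famA I -> forall x, tright_sub tBA I x -> tleft_sub tAB I (tau x)) ->
  (forall J, famB J -> forall x, tleft_sub tBA J x -> tright_sub tAB J (tau x)) ->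
  twist_compatible.
Proof.
move=> [famA_id famA_basis] [famB_id famB_basis] tauI tauJ I J I_id J_id.
have [I1 [I1_fam I1I]] := famA_basis I I_id; have [J1 [J1_fam J1J]] := famB_basis J J_id.
exists I1, J1; split; [exact: famA_id | exact: famB_id |].
move=> a b [I1a | J1b].
- have /(tauI I1 I1_fam)/lin_span_kspan : tright_sub tBA I1 (tBA b a).
    by apply: kspan_gen; exists b, a.
  apply: lin_span_min; first exact: subspace_lin_span.
  by move=> _ [u [v [I1u ->]]]; apply: tsum_gen; left; apply: I1I.
- have /(tauJ J1 J1_fam)/lin_span_kspan : tleft_sub tBA J1 (tBA b a).
    by apply: kspan_gen; exists b, a.
  apply: lin_span_min; first exact: subspace_lin_span.
  by move=> _ [u [v [J1v ->]]]; apply: tsum_gen; right; apply: J1J.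
Qed.

End TwistedTensorProduct.

Theorem proposition3p4 (k : fieldType) (A B : algType k) (TAB TBA : lmodType k)
  (tAB : A -> B -> TAB) (tBA : B -> A -> TBA)
  (tau : TBA -> TAB) (mul : TAB -> TAB -> TAB) :
  is_tensor tAB -> is_tensor tBA ->
  twisting_map tAB tBA tau mul ->
  let osA := cofinite_os (V := A) *%R in
  let osB := cofinite_os (V := B) *%R in
  let cond_i := lin_continuous (tensor_os tBA osB osA) (tensor_os tAB osA osB) tau in
  let cond_ii := lin_continuous (tensor_os tAB osA osB) (cofinite_os mul) id /\
                 lin_continuous (cofinite_os mul) (tensor_os tAB osA osB) id in
  let cond_iii :=
    exists (famA : (A -> Prop) -> Prop) (famB : (B -> Prop) -> Prop),
      [/\ nbhd_basis_F *%R famA, nbhd_basis_F *%R famB,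
          (forall I, famA I -> forall x, tright_sub tBA I x -> tleft_sub tAB I (tau x)) &
          (forall J, famB J -> forall x, tleft_sub tBA J x -> tright_sub tAB J (tau x))] in
  (cond_i <-> cond_ii) /\ (cond_iii -> cond_i).
Proof.
move=> tAB_tensor _ tau_twisting osA osB cond_i cond_ii cond_iii.
split; first split.
- move=> /(twist_compatible_of_continuous_twist tau_twisting) tau_compat; split.
    exact: continuous_id_tensor_twisted tAB_tensor tau_twisting.
  exact: continuous_id_twisted_tensor tAB_tensor tau_twisting tau_compat.
- case=> _ /(twist_compatible_of_continuous_id tAB_tensor tau_twisting) tau_compat.
  exact: continuous_twist tau_twisting tau_compat.
- case=> famA [famB [famA_basis famB_basis tauI tauJ]].
  apply: (continuous_twist tau_twisting).
  exact: twist_compatible_of_stable_bases famA_basis famB_basis tauI tauJ.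
Qed.
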